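(* Let $\mathbf{u}$ be a $C^1$ unit vector field on $\mathbb{R}^2$ whose integral curves are straight lines, i.e. $\mathbf{u}(\mathbf{x}+t\mathbf{u}(\mathbf{x}))=\mathbf{u}(\mathbf{x})$ for all $\mathbf{x}$ and $t\ge0$. Let $\mathbf{f}\in C^2_c(S^1;\mathbb{D})$. Then the data $\mathcal{L}_0\mathbf{f}$ and $\mathcal{L}_0^1\mathbf{f}$ are equivalent (each determines the other), and the data $\mathcal{T}_0\mathbf{f}$ and $\mathcal{T}_0^1\mathbf{f}$ are equivalent.
   Context: $\mathbb{D}$ is the open unit disc in $\mathbb{R}^2$; $C_c^2(S^1;\mathbb{D})$ is the space of $C^2$ vector fields on $\mathbb{R}^2$ with compact support in $\mathbb{D}$. For $\mathbf{a}=(a_1,a_2)$, $\mathbf{a}^\perp=(-a_2,a_1)$. Define $\mathcal{L}_0\mathbf{f}(\mathbf{x})=-\int_0^\infty \mathbf{u}(\mathbf{x})\cdot\mathbf{f}(\mathbf{x}+t\mathbf{u}(\mathbf{x}))\,dt$, $\mathcal{T}_0\mathbf{f}(\mathbf{x})=-\int_0^\infty \mathbf{u}^\perp(\mathbf{x})\cdot\mathbf{f}(\mathbf{x}+t\mathbf{u}(\mathbf{x}))\,dt$, and the first moments $\mathcal{L}^1_0\mathbf{f}(\mathbf{x})=-\int_0^\infty t\,\mathbf{u}(\mathbf{x})\cdot\mathbf{f}(\mathbf{x}+t\mathbf{u}(\mathbf{x}))\,dt$, $\mathcal{T}^1_0\mathbf{f}(\mathbf{x})=-\int_0^\infty t\,\mathbf{u}^\perp(\mathbf{x})\cdot\mathbf{f}(\mathbf{x}+t\mathbf{u}(\mathbf{x}))\,dt$.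 *)

From Stdlib Require Import Reals.
From Coquelicot Require Import Coquelicot.
Open Scope R_scope.

Definition pt := (R * R)%type.
Definition dot (a b : pt) : R := fst a * fst b + snd a * snd b.
Definition perp (a : pt) : pt := (- snd a, fst a).
Definition add_sc (x : pt) (t : R) (v : pt) : pt :=
  (fst x + t * fst v, snd x + t * snd v).

Definition partial1 (g : pt -> R) (p : pt) : R := Derive (fun s => g (s, snd p)) (fst p).
Definition partial2 (g : pt -> R) (p : pt) : R := Derive (fun s => g (fst p, s)) (snd p).

Definition C1_scalar (g : pt -> R) : Prop :=
  (forall p, continuous g p) /\
  (forall p, ex_derive (fun s => g (s, snd p)) (fst p) /\
             ex_derive (fun s => g (fst p, s)) (snd p)) /\
  (forall p, continuous (partial1 g) p /\ continuous (partial2 g) p).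

Definition C2_scalar (g : pt -> R) : Prop :=
  C1_scalar g /\ C1_scalar (partial1 g) /\ C1_scalar (partial2 g).

Definition C1_field (u : pt -> pt) : Prop :=
  C1_scalar (fun p => fst (u p)) /\ C1_scalar (fun p => snd (u p)).

(* C^2_c(S^1; D): C^2 vector fields on R^2 with compact support in the open unit disc,
   i.e. vanishing outside some closed disc of radius r < 1. *)
Definition Cc2_disc (f : pt -> pt) : Prop :=
  C2_scalar (fun p => fst (f p)) /\ C2_scalar (fun p => snd (f p)) /\
  exists r, 0 <= r < 1 /\ forall x, r * r < dot x x -> f x = (0, 0).

Definition int0inf (h : R -> R) : R :=
  RInt_gen h (at_point 0) (Rbar_locally p_infty).

Definition L0 (u f : pt -> pt) (x : pt) : R :=
  - int0inf (fun t => dot (u x) (f (add_sc x t (u x)))).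
Definition T0 (u f : pt -> pt) (x : pt) : R :=
  - int0inf (fun t => dot (perp (u x)) (f (add_sc x t (u x)))).
Definition L01 (u f : pt -> pt) (x : pt) : R :=
  - int0inf (fun t => t * dot (u x) (f (add_sc x t (u x)))).
Definition T01 (u f : pt -> pt) (x : pt) : R :=
  - int0inf (fun t => t * dot (perp (u x)) (f (add_sc x t (u x)))).

From Stdlib Require Import Reals Lra FunctionalExtensionality.
From Coquelicot Require Import Coquelicot.
Open Scope R_scope.

(* With w the identity (for L) or perp (for T): since u is constant along the ray
   y = x + s u(x), s >= 0, both data at y are tail integrals of the one profile
   F(r) = w(u x) . h(x + r u(x)), namely -int_s^oo F and -int_s^oo (r - s) F(r) dr.
   The derivative in s of the first is -F(s), and that of the second is minus the
   first, so either family of tails vanishes for all s >= 0 iff F = 0 on (0, oo).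
   Applied to the difference of the profiles of f and g this gives both
   equivalences. *)

Definition continuous_everywhere (D : R -> R) : Prop := forall t, continuous D t.

Lemma ex_RInt_continuous_everywhere (D : R -> R) a b :
  continuous_everywhere D -> ex_RInt D a b.
Proof.
  intros HD. apply (ex_RInt_continuous (V := R_CompleteNormedModule)).
  intros t _. apply HD.
Qed.

Lemma continuous_everywhere_mult (D E : R -> R) :
  continuous_everywhere D -> continuous_everywhere E ->
  continuous_everywhere (fun t => D t * E t).
Proof. intros HD HE t. apply (continuous_mult D E); auto. Qed.

Lemma continuous_everywhere_minus (D E : R -> R) :
  continuous_everywhere D -> continuous_everywhere E ->
  continuous_everywhere (fun t => D t - E t).
Proof. intros HD HE t. apply (continuous_minus D E); auto. Qed.

Lemma continuous_everywhere_id : continuous_everywhere (fun t => t).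
Proof. intros t. apply continuous_id. Qed.

Lemma continuous_everywhere_const (c : R) : continuous_everywhere (fun _ => c).
Proof. intros t. apply continuous_const. Qed.

Lemma continuous_everywhere_moment (D : R -> R) s :
  continuous_everywhere D -> continuous_everywhere (fun t => (t - s) * D t).
Proof.
  intros HD. apply continuous_everywhere_mult; [|exact HD].
  apply continuous_everywhere_minus;
    [apply continuous_everywhere_id | apply continuous_everywhere_const].
Qed.

Lemma RInt_vanishing (h : R -> R) a b :
  (forall t, Rmin a b < t < Rmax a b -> h t = 0) -> RInt h a b = 0.
Proof.
  intros Hh. rewrite (RInt_ext _ (fun _ => 0)) by exact Hh.
  rewrite RInt_const. unfold scal; simpl; unfold mult; simpl. ring.
Qed.

Lemma RInt_vanishing_pos (h : R -> R) s M :
  (forall t, 0 < t -> h t = 0) -> 0 <= s -> 0 <= M -> RInt h s M = 0.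
Proof.
  intros Hh Hs HM. apply RInt_vanishing. intros t [Ht _]. apply Hh.
  unfold Rmin in Ht. destruct (Rle_dec s M); lra.
Qed.

Lemma RInt_eq_iff_RInt_minus_eq0 (F G : R -> R) a b :
  continuous_everywhere F -> continuous_everywhere G ->
  RInt F a b = RInt G a b <-> RInt (fun t => F t - G t) a b = 0.
Proof.
  intros HF HG.
  change (RInt (fun t => F t - G t) a b) with (RInt (fun t => minus (F t) (G t)) a b).
  rewrite (RInt_minus (V := R_CompleteNormedModule)) by (apply ex_RInt_continuous_everywhere; assumption).
  unfold minus, plus, opp; simpl. split; intros; lra.
Qed.

Lemma is_derive_RInt_lower (D : R -> R) M s :
  continuous_everywhere D -> is_derive (fun a => RInt D a M) s (- D s).
Proof.
  intros HD. apply (is_derive_RInt' D (fun a => RInt D a M) s M).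
  - apply filter_forall. intros a.
    apply (RInt_correct (V := R_CompleteNormedModule)), ex_RInt_continuous_everywhere, HD.
  - apply HD.
Qed.

(* Writing the moment as [RInt (t D t) - a RInt D], the product rule cancels the two boundary terms. *)
Lemma is_derive_RInt_moment_lower (D : R -> R) M s :
  continuous_everywhere D ->
  is_derive (fun a => RInt (fun t => (t - a) * D t) a M) s (- RInt D s M).
Proof.
  intros HD.
  assert (Hsplit : forall a, RInt (fun t => (t - a) * D t) a M
                             = minus (RInt (fun t => t * D t) a M) (mult a (RInt D a M))).
  { intros a.
    rewrite (RInt_ext _ (fun t => minus (t * D t) (scal a (D t)))).
    2:{ intros t _. unfold minus, plus, opp, scal; simpl; unfold mult; simpl. ring. }
    rewrite (RInt_minus (V := R_CompleteNormedModule)), (RInt_scal (V := R_CompleteNormedModule));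
      try reflexivity.
    - apply ex_RInt_continuous_everywhere, HD.
    - apply ex_RInt_continuous_everywhere, continuous_everywhere_mult;
        [apply continuous_everywhere_id | exact HD].
    - apply (ex_RInt_scal (V := R_CompleteNormedModule)), ex_RInt_continuous_everywhere, HD. }
  apply (is_derive_ext _ _ s _ (fun a => eq_sym (Hsplit a))).
  evar (l : R). replace (- RInt D s M) with l; subst l.
  - apply (is_derive_minus (K := R_AbsRing) (V := R_NormedModule)).
    + apply (is_derive_RInt_lower (fun t => t * D t)), continuous_everywhere_mult;
        [apply continuous_everywhere_id | exact HD].
    + apply (is_derive_mult (K := R_AbsRing)).
      * apply (is_derive_id (K := R_AbsRing)).
      * apply is_derive_RInt_lower, HD.
      * intros; apply Rmult_comm.
  - unfold minus, plus, opp, mult, one; simpl. ring.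
Qed.

Lemma is_derive_vanishing_pos (P : R -> R) t l :
  0 < t -> (forall a, 0 < a -> P a = 0) -> is_derive P t l -> l = 0.
Proof.
  intros Ht HP HPl.
  assert (HP0 : is_derive P t 0).
  { apply is_derive_ext_loc with (fun _ => 0).
    - exists (mkposreal t Ht). intros a Ha. symmetry. apply HP.
      apply Rabs_def2 in Ha. simpl in Ha. unfold minus, plus, opp in Ha; simpl in Ha. lra.
    - apply (is_derive_const (V := R_NormedModule)). }
  apply is_derive_unique in HPl. apply is_derive_unique in HP0. congruence.
Qed.

Lemma vanishing_pos_of_RInt_lower (D : R -> R) M :
  continuous_everywhere D ->
  (forall s, 0 < s -> RInt D s M = 0) -> forall t, 0 < t -> D t = 0.
Proof.
  intros HD H t Ht.
  pose proof (is_derive_vanishing_pos _ t _ Ht H (is_derive_RInt_lower D M t HD)). lra.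
Qed.

Lemma RInt_lower_eq0_iff (D : R -> R) M :
  continuous_everywhere D -> 0 <= M ->
  (forall s, 0 <= s -> RInt D s M = 0) <-> (forall t, 0 < t -> D t = 0).
Proof.
  intros HD HM. split.
  - intros H. apply (vanishing_pos_of_RInt_lower D M HD).
    intros s Hs. apply H. lra.
  - intros H s Hs. apply RInt_vanishing_pos; assumption.
Qed.

Lemma RInt_moment_lower_eq0_iff (D : R -> R) M :
  continuous_everywhere D -> 0 <= M ->
  (forall s, 0 <= s -> RInt (fun t => (t - s) * D t) s M = 0) <->
  (forall t, 0 < t -> D t = 0).
Proof.
  intros HD HM. split.
  - intros H. apply (vanishing_pos_of_RInt_lower D M HD).
    intros s Hs.
    pose proof (is_derive_vanishing_pos _ s _ Hs (fun a Ha => H a (Rlt_le _ _ Ha))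
                  (is_derive_RInt_moment_lower D M s HD)). lra.
  - intros H s Hs. apply RInt_vanishing_pos; [|assumption..].
    intros t Ht. rewrite (H t Ht). ring.
Qed.

Lemma RInt_lower_eq_iff_moment_eq (F G : R -> R) M :
  continuous_everywhere F -> continuous_everywhere G -> 0 <= M ->
  (forall s, 0 <= s -> RInt F s M = RInt G s M) <->
  (forall s, 0 <= s -> RInt (fun t => (t - s) * F t) s M = RInt (fun t => (t - s) * G t) s M).
Proof.
  intros HF HG HM.
  pose proof (continuous_everywhere_minus F G HF HG) as HFG.
  assert (Hdiff : forall s, RInt F s M = RInt G s M <-> RInt (fun t => F t - G t) s M = 0)
    by (intros s; apply RInt_eq_iff_RInt_minus_eq0; assumption).
  assert (Hmoment_diff : forall s,
    RInt (fun t => (t - s) * F t) s M = RInt (fun t => (t - s) * G t) s M <->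
    RInt (fun t => (t - s) * (F t - G t)) s M = 0).
  { intros s.
    rewrite (RInt_eq_iff_RInt_minus_eq0 _ _ s M) by (apply continuous_everywhere_moment; assumption).
    rewrite (RInt_ext (fun t => (t - s) * F t - (t - s) * G t) (fun t => (t - s) * (F t - G t)))
      by (intros t _; simpl; ring).
    reflexivity. }
  transitivity (forall t, 0 < t -> F t - G t = 0).
  - rewrite <- (RInt_lower_eq0_iff _ M HFG HM).
    split; intros H s Hs; apply Hdiff; auto.
  - rewrite <- (RInt_moment_lower_eq0_iff _ M HFG HM).
    split; intros H s Hs; apply Hmoment_diff; auto.
Qed.

Lemma is_RInt_gen_vanishing_tail (h : R -> R) M :
  (forall t, M <= t -> h t = 0) -> is_RInt_gen h (at_point M) (Rbar_locally p_infty) 0.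
Proof.
  intros Hh P HP.
  apply (Filter_prod _ _ _ (fun a => a = M) (fun b => M < b)).
  - reflexivity.
  - exists M. auto.
  - intros a b Ha Hb. simpl in Ha, Hb. subst a. exists 0. simpl. split.
    + apply (is_RInt_ext (fun _ => 0)).
      * intros t [Ht _]. symmetry. apply Hh.
        unfold Rmin in Ht. destruct (Rle_dec M b); lra.
      * pose proof (is_RInt_const (V := R_NormedModule) M b 0) as Hconst.
        replace (scal (b - M) (0 : R_NormedModule)) with (0 : R) in Hconst
          by (unfold scal; simpl; unfold mult; simpl; ring).
        exact Hconst.
    + apply locally_singleton. exact HP.
Qed.

Lemma int0inf_eq_RInt (h : R -> R) M :
  continuous_everywhere h -> (forall t, M <= t -> h t = 0) -> int0inf h = RInt h 0 M.
Proof.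
  intros Hc Hh. unfold int0inf.
  apply (is_RInt_gen_unique (V := R_CompleteNormedModule)).
  replace (RInt h 0 M) with (plus (RInt h 0 M) 0) by (unfold plus; simpl; ring).
  apply (is_RInt_gen_Chasles (V := R_NormedModule)) with M.
  - apply is_RInt_gen_at_point, (RInt_correct (V := R_CompleteNormedModule)),
      ex_RInt_continuous_everywhere, Hc.
  - apply is_RInt_gen_vanishing_tail, Hh.
Qed.

Lemma int0inf_shift (phi : R -> R) M s :
  continuous_everywhere phi -> (forall t, M <= t -> phi t = 0) -> 0 <= s ->
  int0inf (fun t => phi (s + t)) = RInt phi s M.
Proof.
  intros Hc Hphi Hs.
  rewrite (int0inf_eq_RInt _ M).
  2:{ intros t. apply (continuous_comp (fun t => s + t) phi); [|apply Hc].
      apply (continuous_plus (fun _ => s) (fun t => t));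
        [apply continuous_const | apply continuous_id]. }
  2:{ intros t Ht. apply Hphi. lra. }
  rewrite (RInt_ext _ (fun t => scal 1 (phi (1 * t + s)))).
  2:{ intros t _. unfold scal; simpl; unfold mult; simpl. rewrite Rmult_1_l. f_equal; ring. }
  rewrite (RInt_comp_lin (V := R_CompleteNormedModule)) by apply ex_RInt_continuous_everywhere, Hc.
  replace (1 * 0 + s) with s by ring. replace (1 * M + s) with (M + s) by ring.
  rewrite <- (RInt_Chasles (V := R_CompleteNormedModule) phi s M (M + s))
    by apply ex_RInt_continuous_everywhere, Hc.
  rewrite (RInt_vanishing phi M (M + s)).
  - unfold plus; simpl. ring.
  - intros t [Ht _]. apply Hphi. unfold Rmin in Ht. destruct (Rle_dec M (M + s)); lra.
Qed.

Lemma add_sc_0 (x v : pt) : add_sc x 0 v = x.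
Proof. destruct x; unfold add_sc; simpl; f_equal; ring. Qed.

Lemma add_sc_add (x v : pt) s t : add_sc (add_sc x s v) t v = add_sc x (s + t) v.
Proof. unfold add_sc; simpl; f_equal; ring. Qed.

Lemma continuous_add_sc (x v : pt) t : continuous (fun s => add_sc x s v) t.
Proof.
  unfold add_sc.
  apply (continuous_comp_2 (fun s => fst x + s * fst v) (fun s => snd x + s * snd v) pair).
  - apply (continuous_plus (fun _ => fst x) (fun s => s * fst v)); [apply continuous_const|].
    apply (continuous_mult (fun s => s) (fun _ => fst v)); [apply continuous_id | apply continuous_const].
  - apply (continuous_plus (fun _ => snd x) (fun s => s * snd v)); [apply continuous_const|].
    apply (continuous_mult (fun s => s) (fun _ => snd v)); [apply continuous_id | apply continuous_const].
  - apply continuous_ext with (fun p => p); [intros []; reflexivity | apply continuous_id].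
Qed.

(* From [|x + a|^2 >= 0] with [|a| = 1] one gets [2 x.a >= -(|x|^2 + 1)], so [|x + t a|^2 >= |x|^2 + t (t - |x|^2 - 1) >= t]. *)
Lemma far_along_unit_ray (x a : pt) t :
  dot a a = 1 -> dot x x + 2 <= t -> 1 < dot (add_sc x t a) (add_sc x t a).
Proof.
  destruct x as [x1 x2], a as [a1 a2]; unfold dot, add_sc; simpl. intros Ha Ht.
  assert (Hxa : 2 * (x1 * a1 + x2 * a2) >= - (x1 * x1 + x2 * x2 + 1))
    by (pose proof (Rle_0_sqr (x1 + a1)); pose proof (Rle_0_sqr (x2 + a2));
        unfold Rsqr in *; nra).
  assert (Ht0 : 0 <= t) by nra.
  nra.
Qed.

Lemma Cc2_disc_vanishes_far (h : pt -> pt) (x a : pt) t :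
  Cc2_disc h -> dot a a = 1 -> dot x x + 2 <= t -> h (add_sc x t a) = (0, 0).
Proof.
  intros [_ [_ [r [Hr Hh]]]] Ha Ht. apply Hh.
  pose proof (far_along_unit_ray x a t Ha Ht). nra.
Qed.

Definition ray_profile (c : pt) (h : pt -> pt) (x a : pt) (r : R) : R :=
  dot c (h (add_sc x r a)).

Lemma continuous_ray_profile (c : pt) (h : pt -> pt) (x a : pt) :
  Cc2_disc h -> continuous_everywhere (ray_profile c h x a).
Proof.
  intros [[[Hh1 _] _] [[[Hh2 _] _] _]] t. unfold ray_profile, dot.
  apply (continuous_plus (fun s => fst c * fst (h (add_sc x s a)))
                         (fun s => snd c * snd (h (add_sc x s a)))).
  - apply (continuous_mult (fun _ => fst c)); [apply continuous_const|].
    apply (continuous_comp (fun s => add_sc x s a) (fun p => fst (h p)));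
      [apply continuous_add_sc | apply Hh1].
  - apply (continuous_mult (fun _ => snd c)); [apply continuous_const|].
    apply (continuous_comp (fun s => add_sc x s a) (fun p => snd (h p)));
      [apply continuous_add_sc | apply Hh2].
Qed.

Lemma ray_profile_vanishes_far (c : pt) (h : pt -> pt) (x a : pt) t :
  Cc2_disc h -> dot a a = 1 -> dot x x + 2 <= t -> ray_profile c h x a t = 0.
Proof.
  intros Hh Ha Ht. unfold ray_profile.
  rewrite (Cc2_disc_vanishes_far h x a t Hh Ha Ht). unfold dot; simpl. ring.
Qed.

Definition ray_transform (w u h : pt -> pt) (x : pt) : R :=
  - int0inf (fun t => dot (w (u x)) (h (add_sc x t (u x)))).

Definition ray_moment (w u h : pt -> pt) (x : pt) : R :=
  - int0inf (fun t => t * dot (w (u x)) (h (add_sc x t (u x)))).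

Section StraightLineField.

Variable u : pt -> pt.
Hypothesis u_unit : forall x, dot (u x) (u x) = 1.
Hypothesis u_straight : forall x t, 0 <= t -> u (add_sc x t (u x)) = u x.
Variable w : pt -> pt.

Lemma ray_transform_along_ray (h : pt -> pt) x s : Cc2_disc h -> 0 <= s ->
  ray_transform w u h (add_sc x s (u x)) =
  - RInt (ray_profile (w (u x)) h x (u x)) s (dot x x + 2).
Proof.
  intros Hh Hs. unfold ray_transform. rewrite (u_straight x s Hs). f_equal.
  rewrite <- (int0inf_shift _ _ s (continuous_ray_profile _ h x (u x) Hh)
                (fun r => ray_profile_vanishes_far _ h x (u x) r Hh (u_unit x)) Hs).
  f_equal. apply functional_extensionality. intros t.
  unfold ray_profile. rewrite add_sc_add. reflexivity.
Qed.

Lemma ray_moment_along_ray (h : pt -> pt) x s : Cc2_disc h -> 0 <= s ->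
  ray_moment w u h (add_sc x s (u x)) =
  - RInt (fun r => (r - s) * ray_profile (w (u x)) h x (u x) r) s (dot x x + 2).
Proof.
  intros Hh Hs. unfold ray_moment. rewrite (u_straight x s Hs). f_equal.
  rewrite <- (int0inf_shift (fun r => (r - s) * ray_profile (w (u x)) h x (u x) r) (dot x x + 2) s).
  - f_equal. apply functional_extensionality. intros t.
    unfold ray_profile. rewrite add_sc_add. f_equal. ring.
  - apply continuous_everywhere_moment, continuous_ray_profile, Hh.
  - intros r Hr. rewrite (ray_profile_vanishes_far _ h x (u x) r Hh (u_unit x) Hr). ring.
  - exact Hs.
Qed.

Lemma ray_transform_eq_iff_ray_moment_eq (f g : pt -> pt) :
  Cc2_disc f -> Cc2_disc g ->
  (forall x, ray_transform w u f x = ray_transform w u g x) <->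
  (forall x, ray_moment w u f x = ray_moment w u g x).
Proof.
  intros Hf Hg.
  assert (Hprofiles : forall x,
    (forall s, 0 <= s -> RInt (ray_profile (w (u x)) f x (u x)) s (dot x x + 2) =
                         RInt (ray_profile (w (u x)) g x (u x)) s (dot x x + 2)) <->
    (forall s, 0 <= s ->
       RInt (fun r => (r - s) * ray_profile (w (u x)) f x (u x) r) s (dot x x + 2) =
       RInt (fun r => (r - s) * ray_profile (w (u x)) g x (u x) r) s (dot x x + 2))).
  { intros x. apply RInt_lower_eq_iff_moment_eq; try (apply continuous_ray_profile; assumption).
    unfold dot. pose proof (Rle_0_sqr (fst x)). pose proof (Rle_0_sqr (snd x)).
    unfold Rsqr in *. lra. }
  split; intros H x.
  - pose proof (ray_moment_along_ray f x 0 Hf (Rle_refl 0)) as Ef.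
    pose proof (ray_moment_along_ray g x 0 Hg (Rle_refl 0)) as Eg.
    rewrite add_sc_0 in Ef, Eg. rewrite Ef, Eg. f_equal.
    apply Hprofiles; [|lra]. intros s Hs.
    pose proof (H (add_sc x s (u x))) as Hx.
    rewrite !ray_transform_along_ray in Hx by assumption. lra.
  - pose proof (ray_transform_along_ray f x 0 Hf (Rle_refl 0)) as Ef.
    pose proof (ray_transform_along_ray g x 0 Hg (Rle_refl 0)) as Eg.
    rewrite add_sc_0 in Ef, Eg. rewrite Ef, Eg. f_equal.
    apply Hprofiles; [|lra]. intros s Hs.
    pose proof (H (add_sc x s (u x))) as Hx.
    rewrite !ray_moment_along_ray in Hx by assumption. lra.
Qed.

End StraightLineField.

Theorem lemma4p1 (u : pt -> pt)
  (Hu : C1_field u)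
  (Hunit : forall x, dot (u x) (u x) = 1)
  (Hlines : forall x t, 0 <= t -> u (add_sc x t (u x)) = u x)
  (f g : pt -> pt) (Hf : Cc2_disc f) (Hg : Cc2_disc g) :
  ((forall x, L0 u f x = L0 u g x) <-> (forall x, L01 u f x = L01 u g x)) /\
  ((forall x, T0 u f x = T0 u g x) <-> (forall x, T01 u f x = T01 u g x)).
Proof.
  split.
  - exact (ray_transform_eq_iff_ray_moment_eq u Hunit Hlines (fun v => v) f g Hf Hg).
  - exact (ray_transform_eq_iff_ray_moment_eq u Hunit Hlines perp f g Hf Hg).
Qed.
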